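(* Let $d\ge1$ and let $p,q\in[0,1]$ satisfy $p\ge\sqrt{2qd}$. Let $u_0,\dots,u_{d-1}$, $v_0,\dots,v_{d-1}$ be $\mathrm{Bern}(p)$ random variables and $x_0,\dots,x_{d^2-1}$ be $\mathrm{Bern}(q)$ random variables, all mutually independent. Then for every subset $S\subseteq\{0,1,\dots,d^2-1\}$, $$\mathbb{P}\Big(\sum_{i\in S}u_{\lfloor i/d\rfloor}\,v_{i\bmod d}=0\Big)\le\mathbb{P}\Big(\sum_{i\in S}x_i=0\Big).$$
   Context: $\mathrm{Bern}(p)$ denotes the distribution on $\{0,1\}$ taking value $1$ with probability $p$. *)

From HB Require Import structures.
From mathcomp Require Import all_boot all_order all_algebra.
From mathcomp Require Import reals.
Set Implicit Arguments. Unset Strict Implicit. Unset Printing Implicit Defensive.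
Import Order.TTheory GRing.Theory Num.Theory.
Local Open Scope ring_scope.

(* Probability weight of an outcome w of |I| mutually independent Bern(p)
   variables (w i is the value of the i-th variable). *)
Definition bern_weight (R : realType) (I : finType) (p : R) (w : {ffun I -> bool}) : R :=
  \prod_(i : I) (if w i then p else 1 - p).

Definition bern_prob (R : realType) (I : finType) (p : R) (E : pred {ffun I -> bool}) : R :=
  \sum_(w : {ffun I -> bool} | E w) bern_weight p w.

(* Probability of an event E about (u, v), where u, v are two independent
   families of |I| i.i.d. Bern(p) variables (all 2|I| mutually independent). *)
Definition bern_prob2 (R : realType) (I : finType) (p : R)
    (E : {ffun I -> bool} -> {ffun I -> bool} -> bool) : R :=
  \sum_(u : {ffun I -> bool}) \sum_(v : {ffun I -> bool} | E u v)
     bern_weight p u * bern_weight p v.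

(* The value u_k (as a 0/1 natural number) of a family u indexed by 'I_d,
   accessed through a natural-number index k (0 if k >= d, never used). *)
Definition bitn (d : nat) (u : {ffun 'I_d -> bool}) (k : nat) : nat :=
  if insub k is Some j then nat_of_bool (u j) else 0%N.

From HB Require Import structures.
From mathcomp Require Import all_boot all_order all_algebra.
From mathcomp Require Import reals.
From mathcomp Require Import ring lra.
Set Implicit Arguments. Unset Strict Implicit. Unset Printing Implicit Defensive.
Import Order.TTheory GRing.Theory Num.Theory.
Local Open Scope ring_scope.

(* Write r(i) = i / d and c(i) = i mod d, so the cell i of S is
   "hit" when u_{r(i)} = v_{c(i)} = 1, and let L(S) be the probability that
   no cell of S is hit.  Pick e in S and let S' be the cells of S sharing
   neither the row nor the column of e.  The event "S' is not hit" does not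
   depend on u_{r(e)} or v_{c(e)}, so
       L(S) <= P(S' not hit) - P(u_{r(e)} = v_{c(e)} = 1, S' not hit)
            = (1 - p^2) L(S').
   At most 2d cells of S share a row or column with e, hence
   |S| <= |S'| + 2d, and p^2 >= 2dq together with Bernoulli's inequality
   gives 1 - p^2 <= (1 - q)^(2d).  Induction on |S| yields
   L(S) <= (1 - q)^|S| = P(x_i = 0 for all i in S). *)

Lemma bernoulli_ineq (R : realFieldType) (q : R) (n : nat) :
  0 <= q -> q <= 1 -> 1 - n%:R * q <= (1 - q) ^+ n.
Proof.
move=> q0 q1; elim: n => [|n IH]; first by rewrite expr0 mul0r subr0.
have q1' : 0 <= 1 - q by rewrite subr_ge0.
have n0 : 0 <= (n%:R : R) by [].
have nqq : 0 <= n%:R * (q * q) by rewrite !mulr_ge0.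
apply: le_trans (_ : (1 - q) * (1 - n%:R * q) <= _); last first.
  by rewrite exprS ler_wpM2l.
rewrite -natr1; nra.
Qed.

Section BernoulliProduct.
Variables (R : realType) (I : finType) (p : R).
Implicit Types (w : {ffun I -> bool}) (F G : {ffun I -> bool} -> R).

Definition bern_exp F : R := \sum_w bern_weight p w * F w.

Definition toggle (j : I) w : {ffun I -> bool} :=
  [ffun i => if i == j then ~~ w j else w i].

Lemma toggle_at j w : toggle j w j = ~~ w j.
Proof. by rewrite ffunE eqxx. Qed.

Lemma toggle_ne j w i : i != j -> toggle j w i = w i.
Proof. by rewrite ffunE => /negbTE ->. Qed.

Lemma toggleK j : involutive (toggle j).
Proof.
move=> w; apply/ffunP => i; case: (eqVneq i j) => [->|ij].
  by rewrite !toggle_at negbK.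
by rewrite !toggle_ne.
Qed.

Lemma eq_bern_exp F G : F =1 G -> bern_exp F = bern_exp G.
Proof. by move=> FG; apply: eq_bigr => w _; rewrite FG. Qed.

Lemma bern_probE (E : pred {ffun I -> bool}) :
  bern_prob p E = bern_exp (fun w => (E w)%:R).
Proof.
rewrite /bern_prob /bern_exp big_mkcond; apply: eq_bigr => w _.
by case: (E w); rewrite ?mulr1 ?mulr0.
Qed.

Lemma bern_exp1 : bern_exp (fun=> 1) = 1.
Proof.
rewrite /bern_exp (eq_bigr _ (fun w _ => mulr1 _)) /bern_weight.
rewrite -(bigA_distr_bigA (fun (i : I) (b : bool) => if b then p else 1 - p)) /=.
by rewrite big1 // => i _; rewrite big_bool /= addrC subrK.
Qed.

Lemma bern_expB F G :
  bern_exp (fun w => F w - G w) = bern_exp F - bern_exp G.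
Proof. by rewrite /bern_exp -sumrB; apply: eq_bigr => w _; rewrite mulrBr. Qed.

Lemma bern_expZ (c : R) F : bern_exp (fun w => c * F w) = c * bern_exp F.
Proof. by rewrite /bern_exp big_distrr; apply: eq_bigr => w _; rewrite mulrCA. Qed.

Lemma bern_weight_ge0 w : 0 <= p -> p <= 1 -> 0 <= bern_weight p w.
Proof.
by move=> p0 p1; apply: prodr_ge0 => i _; case: (w i); rewrite ?subr_ge0.
Qed.

Lemma bern_exp_ge0 F : 0 <= p -> p <= 1 ->
  (forall w, 0 <= F w) -> 0 <= bern_exp F.
Proof.
by move=> p0 p1 F0; apply: sumr_ge0 => w _; rewrite mulr_ge0 ?bern_weight_ge0.
Qed.

Lemma ler_bern_exp F G : 0 <= p -> p <= 1 ->
  (forall w, F w <= G w) -> bern_exp F <= bern_exp G.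
Proof.
by move=> p0 p1 FG; apply: ler_sum => w _; rewrite ler_wpM2l ?bern_weight_ge0.
Qed.

(* Flipping coordinate j pairs each outcome with
   w_j = 1 with one where w_j = 0, having the same F-value. *)
Lemma bern_exp_coord j F : (forall w, F (toggle j w) = F w) ->
  bern_exp (fun w => (w j)%:R * F w) = p * bern_exp F.
Proof.
move=> Fj; pose c w := \prod_(i | i != j) (if w i then p else 1 - p).
have weightE w : bern_weight p w = (if w j then p else 1 - p) * c w.
  by rewrite /bern_weight (bigD1 j).
have c_toggle w : c (toggle j w) = c w.
  by apply: eq_bigr => i ij; rewrite toggle_ne.
have pairing : \sum_(w : {ffun I -> bool} | w j) bern_weight p w * F w
               = p * \sum_(w : {ffun I -> bool} | ~~ w j) c w * F w.
  rewrite (reindex_inj (can_inj (toggleK j))) big_distrr /=.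
  apply: eq_big => w; first by rewrite toggle_at.
  by rewrite toggle_at => /negbTE wj; rewrite weightE toggle_at wj c_toggle Fj mulrA.
rewrite /bern_exp [LHS](bigID (fun w => w j)) [in RHS](bigID (fun w => w j)) /=.
rewrite [X in _ + X]big1 => [|w /negbTE ->]; last by rewrite mul0r mulr0.
rewrite addr0 (eq_bigr (fun w => bern_weight p w * F w)) => [|w ->]; last by rewrite mul1r.
rewrite pairing [X in _ + X](eq_bigr (fun w => (1 - p) * (c w * F w))); last first.
  by move=> w /negbTE wj; rewrite weightE wj mulrA.
by rewrite -big_distrr /=; ring.
Qed.

Lemma bern_exp_coordN j F : (forall w, F (toggle j w) = F w) ->
  bern_exp (fun w => (~~ w j)%:R * F w) = (1 - p) * bern_exp F.
Proof.
move=> Fj; rewrite mulrBl mul1r -(bern_exp_coord Fj) -bern_expB.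
by apply: eq_bigr => w _; case: (w j); rewrite /= ?mul0r ?mul1r ?subr0 ?subrr.
Qed.

Lemma bern_exp_none (A : {set I}) :
  bern_exp (fun w => [forall i in A, ~~ w i]%:R) = (1 - p) ^+ #|A|.
Proof.
move cardA: #|A| => n; elim: n A cardA => [|n IH] A cardA.
  rewrite (cards0_eq cardA) expr0 -[RHS]bern_exp1; apply: eq_bern_exp => w.
  by have -> : [forall i in set0, ~~ w i] by apply/forall_inP => i; rewrite inE.
have [e eA] : exists e, e \in A by apply/card_gt0P; rewrite cardA.
have cardAe : #|A :\ e| = n by move: cardA; rewrite (cardsD1 e) eA => -[].
have splitA w : [forall i in A, ~~ w i] = ~~ w e && [forall i in A :\ e, ~~ w i].
  apply/forall_inP/andP => [all0 | [we0 /forall_inP rest0] i iA].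
    by split; [apply: all0 | apply/forall_inP => i /setD1P [_ /all0]].
  by case: (eqVneq i e) => [-> // | ie]; apply: rest0; rewrite !inE ie.
rewrite (@eq_bern_exp _ (fun w =>
           (~~ w e)%:R * [forall i in A :\ e, ~~ w i]%:R)); last first.
  by move=> w; rewrite splitA; case: (w e); rewrite /= ?mul1r ?mul0r.
rewrite bern_exp_coordN ?IH ?exprS //.
move=> w; congr (nat_of_bool _)%:R; apply/forall_inP/forall_inP => all0 i iAe.
  by have := all0 i iAe; case/setD1P: iAe => ie _; rewrite toggle_ne.
by case/setD1P: (iAe) => ie _; rewrite toggle_ne ?all0.
Qed.

Lemma bern_prob2E (E : {ffun I -> bool} -> {ffun I -> bool} -> bool) :
  bern_prob2 p E = bern_exp (fun u => bern_exp (fun v => (E u v)%:R)).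
Proof.
apply: eq_bigr => u _; rewrite -bern_probE /bern_prob big_distrr.
by apply: eq_bigr.
Qed.

End BernoulliProduct.

Section RowColumnAvoidance.
Variables (R : realType) (J K : finType) (row col : K -> J).
Implicit Types (S : {set K}) (u v : {ffun J -> bool}).

Definition avoids S u v : bool := [forall i in S, ~~ (u (row i) && v (col i))].

Definition avoid_prob (p : R) S : R :=
  bern_exp p (fun u => bern_exp p (fun v => (avoids S u v)%:R)).

Definition detached S (e : K) : {set K} :=
  [set i in S | (row i != row e) && (col i != col e)].

Lemma avoid_prob0 (p : R) : avoid_prob p set0 = 1.
Proof.
rewrite /avoid_prob -[RHS](@bern_exp1 _ J p); apply: eq_bern_exp => u.
rewrite -[RHS](@bern_exp1 _ J p); apply: eq_bern_exp => v.
by have -> : avoids set0 u v by apply/forall_inP => i; rewrite inE.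
Qed.

Lemma detached_proper S e : e \in S -> detached S e \proper S.
Proof.
move=> eS; apply/properP; split; first by apply/subsetP => i /setIdP [].
by exists e => //; rewrite inE !eqxx andbF.
Qed.

Lemma avoids_detached_toggle S e u v :
  avoids (detached S e) (toggle (row e) u) v = avoids (detached S e) u v /\
  avoids (detached S e) u (toggle (col e) v) = avoids (detached S e) u v.
Proof.
by split; apply: eq_forallb => i; case: (boolP (i \in detached S e)) => //=;
  rewrite inE => /and3P [_ ri ci]; rewrite toggle_ne.
Qed.

(* Pointwise: avoiding S forces avoiding the detached cells, and not hitting e. *)
Lemma avoids_split S e u v : e \in S ->
  (avoids S u v)%:R <= (avoids (detached S e) u v)%:R
     - (u (row e))%:R * ((v (col e))%:R * (avoids (detached S e) u v)%:R) :> R.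
Proof.
move=> eS; have sub : avoids S u v -> avoids (detached S e) u v.
  by move=> /forall_inP av; apply/forall_inP => i /setIdP [iS _]; apply: av.
have miss : avoids S u v -> ~~ (u (row e) && v (col e)).
  by move=> /forall_inP; apply.
move: sub miss; case: (avoids S u v); case: (avoids _ u v);
  case: (u (row e)); case: (v (col e)) => //= sub miss;
  by [have := sub isT | have := miss isT | rewrite ?mul0r ?mulr0 ?subr0 ?mul1r ?subrr].
Qed.

(* One step of the recursion: removing e's row and column costs a factor
   1 - p^2, since u_(row e) and v_(col e) are independent of the rest. *)
Lemma avoid_prob_step (p : R) S e : 0 <= p -> p <= 1 -> e \in S ->
  avoid_prob p S <= (1 - p ^+ 2) * avoid_prob p (detached S e).
Proof.
move=> p0 p1 eS; set S' := detached S e.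
pose G u := bern_exp p (fun v => (avoids S' u v)%:R).
have hit_v u : bern_exp p (fun v =>
      (u (row e))%:R * ((v (col e))%:R * (avoids S' u v)%:R))
    = p * ((u (row e))%:R * G u).
  rewrite bern_expZ bern_exp_coord; first exact: mulrCA.
  by move=> v; rewrite (avoids_detached_toggle S e u v).2.
have hit : bern_exp p (fun u => bern_exp p (fun v =>
      (u (row e))%:R * ((v (col e))%:R * (avoids S' u v)%:R)))
    = p ^+ 2 * avoid_prob p S'.
  rewrite (eq_bern_exp _ hit_v) bern_expZ bern_exp_coord; first by rewrite mulrA -expr2.
  by move=> u; apply: eq_bern_exp => v; rewrite (avoids_detached_toggle S e u v).1.
rewrite mulrBl mul1r -hit /avoid_prob -bern_expB.
apply: ler_bern_exp => // u; rewrite -bern_expB.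
by apply: ler_bern_exp => // v; apply: avoids_split.
Qed.

(* If a cell is determined by its two coordinates (f, g), the cells with a
   given f-coordinate are told apart by g, so there are at most #|J| of them. *)
Lemma card_line (f g : K -> J) (a : J) : injective (fun i => (f i, g i)) ->
  (#|[set i | f i == a]| <= #|J|)%N.
Proof.
move=> fg_inj; rewrite -(card_in_imset (f := g)) ?max_card //.
move=> i j; rewrite !inE => /eqP fi /eqP fj gij.
by apply: fg_inj; rewrite /= fi fj gij.
Qed.

Hypothesis cell_inj : injective (fun i => (row i, col i)).

(* Only the at most 2 #|J| cells in e's row or column are not detached. *)
Lemma card_detached S e : (#|S| <= #|detached S e| + 2 * #|J|)%N.
Proof.
have sub : detached S e \subset S by apply/subsetP => i /setIdP [].
rewrite -(cardsID (detached S e) S) (setIidPr sub) leq_add2l.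
pose Row := [set i | row i == row e]; pose Col := [set i | col i == col e].
have lines : S :\: detached S e \subset Row :|: Col.
  apply/subsetP => i; rewrite !inE.
  by case: (i \in S); case: (row i == row e); case: (col i == col e).
have col_row_inj : injective (fun i => (col i, row i)).
  by move=> i j [ci ri]; apply: cell_inj; rewrite /= ci ri.
apply: leq_trans (subset_leq_card lines) _.
apply: leq_trans (leq_card_setU Row Col).1 _.
rewrite mul2n -addnn.
by apply: leq_add; [exact: card_line cell_inj | exact: card_line col_row_inj].
Qed.

Lemma avoid_prob_bound (p q : R) S : 0 <= p -> p <= 1 -> 0 <= q -> q <= 1 ->
  2 * #|J|%:R * q <= p ^+ 2 -> avoid_prob p S <= (1 - q) ^+ #|S|.
Proof.
move=> p0 p1 q0 q1 pq; move cS: #|S| => n.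
elim/ltn_ind: n S cS => n IH S cS.
have [S0 | [e eS]] := set_0Vmem S.
  by rewrite -cS S0 avoid_prob0 cards0 expr0.
set S' := detached S e.
have q01 : 0 <= 1 - q <= 1 by rewrite subr_ge0 q1 lerBlDr lerDl.
have IH' : avoid_prob p S' <= (1 - q) ^+ #|S'|.
  by apply: IH (erefl _); rewrite -cS proper_card ?detached_proper.
have step_factor : 1 - p ^+ 2 <= (1 - q) ^+ (2 * #|J|).
  by apply: le_trans (bernoulli_ineq _ q0 q1); rewrite natrM lerD2l lerN2.
apply: le_trans (avoid_prob_step p0 p1 eS) _.
apply: le_trans (_ : (1 - q) ^+ (2 * #|J|) * (1 - q) ^+ #|S'| <= _).
  apply: ler_pM => //; first by rewrite subr_ge0 exprn_ile1.
  by apply: bern_exp_ge0 => // u; apply: bern_exp_ge0.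
rewrite -exprD -cS; case/andP: q01 => q0' q1'.
by apply: ler_wiXn2l => //; rewrite addnC card_detached.
Qed.

End RowColumnAvoidance.

Section Grid.
Variable d : nat.
Hypothesis d_gt0 : (0 < d)%N.

Lemma grid_row_subproof (i : 'I_(d ^ 2)) : (i %/ d < d)%N.
Proof. by rewrite ltn_divLR // mulnn. Qed.

Definition grid_row (i : 'I_(d ^ 2)) : 'I_d := Ordinal (grid_row_subproof i).
Definition grid_col (i : 'I_(d ^ 2)) : 'I_d := Ordinal (ltn_pmod i d_gt0).

Lemma grid_cell_inj : injective (fun i => (grid_row i, grid_col i)).
Proof.
move=> i j /= [row_ij col_ij]; apply: val_inj.
by rewrite /= (div.divn_eq i d) (div.divn_eq j d) row_ij col_ij.
Qed.

Lemma bitn_ord (u : {ffun 'I_d -> bool}) (j : 'I_d) : bitn u j = u j.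
Proof. by rewrite /bitn valK. Qed.

Lemma grid_event (u v : {ffun 'I_d -> bool}) (S : {set 'I_(d ^ 2)}) :
  ((\sum_(i in S) bitn u (i %/ d) * bitn v (i %% d)) == 0)%N
  = avoids grid_row grid_col S u v.
Proof.
rewrite sum_nat_eq0; apply: eq_forallb => i.
rewrite -[(i %/ d)%N]/(nat_of_ord (grid_row i)).
rewrite -[(i %% d)%N]/(nat_of_ord (grid_col i)).
by rewrite !bitn_ord muln_eq0; case: (u _); case: (v _).
Qed.

End Grid.

Theorem lemmaD2 (R : realType) (d : nat) (p q : R)
  (hd : (1 <= d)%N) (hp0 : 0 <= p) (hp1 : p <= 1) (hq0 : 0 <= q) (hq1 : q <= 1)
  (hpq : Num.sqrt (2 * q * d%:R) <= p)
  (S : {set 'I_(d ^ 2)}) :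
  bern_prob2 p (fun u v : {ffun 'I_d -> bool} =>
      (\sum_(i in S) (bitn u (i %/ d) * bitn v (i %% d)))%N == 0%N)
  <= bern_prob q (fun x : {ffun 'I_(d ^ 2) -> bool} =>
      (\sum_(i in S) nat_of_bool (x i))%N == 0%N).
Proof.
have pq : 2 * #|'I_d|%:R * q <= p ^+ 2.
  rewrite card_ord mulrAC -ler_sqrt ?exprn_ge0 // sqrtr_sqr ger0_norm //.
have grid_side : bern_prob2 p (fun u v : {ffun 'I_d -> bool} =>
      (\sum_(i in S) (bitn u (i %/ d) * bitn v (i %% d)))%N == 0%N)
    = avoid_prob (grid_row hd) (grid_col hd) p S.
  rewrite bern_prob2E; apply: eq_bern_exp => u; apply: eq_bern_exp => v.
  by rewrite grid_event.
have free_side : bern_prob q (fun x : {ffun 'I_(d ^ 2) -> bool} =>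
      (\sum_(i in S) nat_of_bool (x i))%N == 0%N)
    = bern_exp q (fun x => [forall i in S, ~~ x i]%:R).
  rewrite bern_probE; apply: eq_bern_exp => x; rewrite sum_nat_eq0.
  by congr (nat_of_bool _)%:R; apply: eq_forallb => i; case: (x i).
rewrite grid_side free_side bern_exp_none.
exact (avoid_prob_bound (@grid_cell_inj d hd) S hp0 hp1 hq0 hq1 pq).
Qed.
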